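(* Let $0\le\alpha<1$ and let $r_0=r_0(\alpha)$ be the real root in $(0,1)$ of the equation \[2\big(1-\alpha+2(2-\alpha)r\big)(1-r)^4=1-\alpha+4r+(1+\alpha)r^2.\] Let $\mathcal{F}$ be the class of analytic functions $f(z)=z+\sum_{n\ge2}a_nz^n$ on $\mathbb{D}$ with $a_2=0$ and $|a_n|\le n$ for all $n\ge3$. Then every $f\in\mathcal{F}$ satisfies $\left|\frac{zf''(z)}{f'(z)}\right|\le1-\alpha$ for $|z|\le r_0$; $r_0(\alpha)$ is the radius of convexity of order $\alpha$ of $\mathcal{F}$; and $r_0(1/2)\approx0.125429$ is the radius of uniform convexity of $\mathcal{F}$. All results are sharp (in particular $r_0$ in the first statement cannot be replaced by any larger number).
   Context: $\mathbb{D}=\{z\in\mathbb{C}:|z|<1\}$. For a class $\mathcal{F}$ of analytic functions on $\mathbb{D}$ normalized by $f(0)=0$, $f'(0)=1$, and $0\le\alpha<1$, the radius of convexity of order $\alpha$ of $\mathcal{F}$ is the supremum of $r\in(0,1]$ such that every $f\in\mathcal{F}$ satisfies $f'(z)\ne0$ and $\operatorname{Re}\big(1+zf''(z)/f'(z)\big)>\alpha$ for $|z|<r$. The radius of uniform convexity of $\mathcal{F}$ is the supremum of $r\in(0,1]$ such that every $f\in\mathcal{F}$ satisfies $f'(z)\ne0$ and $\operatorname{Re}\big(1+zf''(z)/f'(z)\big)>\left|zf''(z)/f'(z)\right|$ for $|z|<r$. *)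

From Stdlib Require Import Reals.
From Coquelicot Require Import Coquelicot.
Open Scope R_scope.

(* Sum of a complex series, computed componentwise
   (meaningful when the series converges). *)
Definition csum (u : nat -> C) : C :=
  (Series (fun n => Re (u n)), Series (fun n => Im (u n))).

Definition cpow (z : C) (n : nat) : C := pow_n (K := C_Ring) z n.

(* An analytic function f(z) = sum_n a_n z^n on the unit disk is represented
   by its Taylor coefficient sequence a. *)
Definition fval (a : nat -> C) (z : C) : C :=
  csum (fun n => Cmult (a n) (cpow z n)).

Definition fder1 (a : nat -> C) (z : C) : C :=
  csum (fun n => Cmult (RtoC (INR (n + 1))) (Cmult (a (n + 1)%nat) (cpow z n))).

Definition fder2 (a : nat -> C) (z : C) : C :=
  csum (fun n => Cmult (RtoC (INR ((n + 2) * (n + 1))))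
                       (Cmult (a (n + 2)%nat) (cpow z n))).

Definition inF (a : nat -> C) : Prop :=
  a 0%nat = RtoC 0 /\ a 1%nat = RtoC 1 /\ a 2%nat = RtoC 0 /\
  forall n : nat, (3 <= n)%nat -> Cmod (a n) <= INR n.

Definition zf2f1 (a : nat -> C) (z : C) : C :=
  Cdiv (Cmult z (fder2 a z)) (fder1 a z).

Definition convex_order_radii (alpha : R) : R -> Prop :=
  fun r => 0 < r <= 1 /\
    forall a, inF a -> forall z : C, Cmod z < r ->
      fder1 a z <> RtoC 0 /\ Re (Cplus (RtoC 1) (zf2f1 a z)) > alpha.

Definition unif_convex_radii : R -> Prop :=
  fun r => 0 < r <= 1 /\
    forall a, inF a -> forall z : C, Cmod z < r ->
      fder1 a z <> RtoC 0 /\ Re (Cplus (RtoC 1) (zf2f1 a z)) > Cmod (zf2f1 a z).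

Definition r0_eq (alpha r : R) : Prop :=
  2 * (1 - alpha + 2 * (2 - alpha) * r) * (1 - r) ^ 4
  = 1 - alpha + 4 * r + (1 + alpha) * r ^ 2.

(* For |z| = r < 1 the coefficient bounds a_2 = 0, |a_n| <= n give
     |f'(z)| >= 1 - sum_{n>=3} n^2 r^(n-1) = fder1_min r,
     |z f''(z)| <= sum_{n>=3} n^2 (n-1) r^(n-1) = zfder2_max r,
   both sums being rational functions of r.  The polynomial
   (1-r)^4 ((1-alpha) fder1_min r - zfder2_max r) is the difference of the two sides of the
   equation defining r0; it is decreasing on [0,1], so |z f''/f'| <= 1 - alpha exactly up to r0.
   The function z - sum_{n>=3} n z^n attains both bounds on the positive axis, where
   z f''/f' = - zfder2_max / fder1_min: beyond r0 either its f' vanishes or the quotient is a real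
   number below -(1 - alpha).  Both convexity conditions, Re (1 + w) > alpha and
   Re (1 + w) > |w|, hold whenever |w| < 1 - alpha (with alpha = 1/2 for the second) and fail at
   real w < -(1 - alpha), which yields the two radii. *)

From Stdlib Require Import Reals Lra Psatz Lia.
From Coquelicot Require Import Coquelicot.
Open Scope R_scope.

Lemma is_lim_seq_succ_ratio_pow k :
  is_lim_seq (fun n => (1 + / (INR n + 1)) ^ k) 1.
Proof.
  assert (Hinv : is_lim_seq (fun n => / (INR n + 1)) 0).
  { apply (is_lim_seq_inv _ p_infty); [|discriminate].
    apply is_lim_seq_ext with (fun n => INR (S n)); [intro; apply S_INR|].
    apply (is_lim_seq_incr_1 INR p_infty), is_lim_seq_INR. }
  induction k as [|k IH]; [apply is_lim_seq_const|].
  pose proof (is_lim_seq_mult' _ _ _ _ (is_lim_seq_plus' _ _ _ _ (is_lim_seq_const 1) Hinv) IH) as H.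
  now rewrite Rplus_0_r, Rmult_1_r in H.
Qed.

Lemma ex_series_pow_geom k r : 0 <= r < 1 -> ex_series (fun n => (INR n + 1) ^ k * r ^ n).
Proof.
  intros Hr.
  (* d'Alembert's test needs nonvanishing terms: dominate by the ratio q = (1 + r) / 2 > 0 *)
  set (q := (1 + r) / 2).
  assert (Hq : ex_series (fun n => Rabs ((INR n + 1) ^ k * q ^ n))).
  { apply ex_series_DAlembert with q; [unfold q; lra| |].
    - intro n. apply Rmult_integral_contrapositive.
      split; apply pow_nonzero; [pose proof (pos_INR n)|unfold q]; lra.
    - apply is_lim_seq_ext with (fun n => (1 + / (INR n + 1)) ^ k * q).
      + intro n. pose proof (pos_INR n).
        assert (HS : INR (S n) + 1 = (1 + / (INR n + 1)) * (INR n + 1))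
          by (rewrite S_INR; field; lra).
        assert ((INR n + 1) ^ k <> 0) by (apply pow_nonzero; lra).
        assert (q ^ n <> 0) by (apply pow_nonzero; unfold q; lra).
        replace (q ^ S n) with (q * q ^ n) by reflexivity.
        rewrite HS, Rpow_mult_distr.
        replace (_ / _) with ((1 + / (INR n + 1)) ^ k * q) by (field; split; auto; lra).
        symmetry. apply Rabs_pos_eq, Rmult_le_pos; [|unfold q; lra].
        apply pow_le. pose proof (Rinv_0_lt_compat (INR n + 1)). lra.
      + pose proof (is_lim_seq_mult' _ _ _ _ (is_lim_seq_succ_ratio_pow k) (is_lim_seq_const q)) as H.
        now rewrite Rmult_1_l in H. }
  eapply (@ex_series_le R_AbsRing R_CompleteNormedModule); [|exact Hq].
  intro n. change (Rabs ((INR n + 1) ^ k * r ^ n) <= Rabs ((INR n + 1) ^ k * q ^ n)).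
  pose proof (pos_INR n).
  assert (0 <= (INR n + 1) ^ k) by (apply pow_le; lra).
  rewrite !Rabs_pos_eq; try (apply Rmult_le_pos; auto; apply pow_le; unfold q; lra).
  apply Rmult_le_compat_l; auto. apply pow_incr. unfold q; lra.
Qed.

Definition pow_series k r := Series (fun n => (INR n + 1) ^ k * r ^ n).

Lemma pow_series_shift k r : 0 <= r < 1 ->
  pow_series k r = 1 + r * Series (fun n => (INR n + 2) ^ k * r ^ n).
Proof.
  intros Hr. unfold pow_series.
  rewrite Series_incr_1 by now apply ex_series_pow_geom.
  rewrite <- Series_scal_l. f_equal.
  - simpl. rewrite Rplus_0_l, pow1. ring.
  - apply Series_ext. intro n. rewrite S_INR, <- tech_pow_Rmult.
    replace (INR n + 1 + 1) with (INR n + 2) by ring. ring.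
Qed.

Lemma Series_pow_series_comb k r a b c : 0 <= r < 1 ->
  Series (fun n => (INR n + 1) ^ k * r ^ n + a * r ^ n + b * ((INR n + 1) * r ^ n)
                 + c * ((INR n + 1) ^ 2 * r ^ n))
  = pow_series k r + a * pow_series 0 r + b * pow_series 1 r + c * pow_series 2 r.
Proof.
  intros Hr. unfold pow_series. set (u j n := (INR n + 1) ^ j * r ^ n).
  rewrite (Series_ext _ (fun n => 1 * u k n + a * u 0%nat n + b * u 1%nat n + c * u 2%nat n))
    by (intro; unfold u; simpl; ring).
  rewrite !Series_plus
    by (repeat apply (ex_series_plus (K := R_AbsRing) (V := R_NormedModule));
        apply (ex_series_scal_l (K := R_AbsRing) (V := R_NormedModule)), ex_series_pow_geom, Hr).
  rewrite !Series_scal_l. unfold u. ring.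
Qed.

Lemma pow_series_rec k r a b c : 0 <= r < 1 ->
  (forall x, (x + 2) ^ k = (x + 1) ^ k + a + b * (x + 1) + c * (x + 1) ^ 2) ->
  pow_series k r = (1 + r * (a * pow_series 0 r + b * pow_series 1 r + c * pow_series 2 r)) / (1 - r).
Proof.
  intros Hr Hk. pose proof (pow_series_shift k r Hr) as E.
  rewrite (Series_ext _ (fun n => (INR n + 1) ^ k * r ^ n + a * r ^ n + b * ((INR n + 1) * r ^ n)
                 + c * ((INR n + 1) ^ 2 * r ^ n))) in E by (intro; rewrite Hk; ring).
  rewrite Series_pow_series_comb in E by exact Hr.
  apply Rmult_eq_reg_r with (1 - r); [|lra].
  unfold Rdiv. rewrite Rmult_assoc, Rinv_l, Rmult_1_r by lra. nra.
Qed.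

Lemma pow_series_0 r : 0 <= r < 1 -> pow_series 0 r = 1 / (1 - r).
Proof. intros Hr. rewrite (pow_series_rec 0 r 0 0 0) by (auto || (intro; ring)). field. lra. Qed.

Lemma pow_series_1 r : 0 <= r < 1 -> pow_series 1 r = 1 / (1 - r) ^ 2.
Proof.
  intros Hr. rewrite (pow_series_rec 1 r 1 0 0) by (auto || (intro; ring)).
  rewrite pow_series_0 by exact Hr. field. lra.
Qed.

Lemma pow_series_2 r : 0 <= r < 1 -> pow_series 2 r = (1 + r) / (1 - r) ^ 3.
Proof.
  intros Hr. rewrite (pow_series_rec 2 r 1 2 0) by (auto || (intro; ring)).
  rewrite pow_series_0, pow_series_1 by exact Hr. field. lra.
Qed.

Lemma pow_series_3 r : 0 <= r < 1 -> pow_series 3 r = (1 + 4 * r + r ^ 2) / (1 - r) ^ 4.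
Proof.
  intros Hr. rewrite (pow_series_rec 3 r 1 3 3) by (auto || (intro; ring)).
  rewrite pow_series_0, pow_series_1, pow_series_2 by exact Hr. field. lra.
Qed.

Lemma cpow_RtoC s n : cpow (RtoC s) n = RtoC (s ^ n).
Proof.
  induction n as [|n IH]; [reflexivity|].
  unfold cpow in *. simpl pow_n. rewrite IH.
  change (Cmult (RtoC s) (RtoC (s ^ n)) = RtoC (s * s ^ n)). now rewrite RtoC_mult.
Qed.

Lemma Cmod_cpow z n : Cmod (cpow z n) = Cmod z ^ n.
Proof.
  induction n as [|n IH]; [apply Cmod_1|].
  unfold cpow in *. simpl pow_n.
  change (Cmod (Cmult z (pow_n (K := C_Ring) z n)) = Cmod z * Cmod z ^ n).
  now rewrite Cmod_mult, IH.
Qed.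

Lemma csum_ext u v : (forall n, u n = v n) -> csum u = csum v.
Proof. intros H. unfold csum. f_equal; apply Series_ext; intro n; now rewrite H. Qed.

Lemma csum_RtoC x : csum (fun n => RtoC (x n)) = RtoC (Series x).
Proof.
  unfold csum, RtoC. simpl. f_equal.
  rewrite <- (Series_ext (fun n => 0 * x n)) by (intro; ring).
  rewrite Series_scal_l. ring.
Qed.

Lemma im_le_Cmod z : Rabs (Im z) <= Cmod z.
Proof.
  destruct z as [x y]. unfold Cmod. simpl.
  rewrite <- sqrt_Rsqr_abs. apply sqrt_le_1_alt. unfold Rsqr. nra.
Qed.

Lemma Re_1_plus_ge w : 1 - Cmod w <= Re (Cplus (RtoC 1) w).
Proof.
  pose proof (re_le_Cmod w) as H. pose proof (Rle_abs (- Re w)) as H'. rewrite Rabs_Ropp in H'.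
  destruct w as [x y]. simpl in *. lra.
Qed.

Section DominatedComplexSeries.

Variables (u : nat -> C) (c : nat -> R).
Hypothesis Hu : forall n, Cmod (u n) <= c n.
Hypothesis Hc : ex_series c.

Lemma ex_series_Re : ex_series (fun n => Re (u n)).
Proof.
  apply (@ex_series_le R_AbsRing R_CompleteNormedModule _ c); [|exact Hc].
  intro n. eapply Rle_trans; [apply re_le_Cmod|apply Hu].
Qed.

Lemma ex_series_Im : ex_series (fun n => Im (u n)).
Proof.
  apply (@ex_series_le R_AbsRing R_CompleteNormedModule _ c); [|exact Hc].
  intro n. eapply Rle_trans; [|apply Hu].
  apply im_le_Cmod.
Qed.

Lemma csum_incr_1 : csum u = Cplus (u 0%nat) (csum (fun n => u (S n))).
Proof.
  unfold csum.
  rewrite (Series_incr_1 (fun n => Re (u n))) by exact ex_series_Re.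
  rewrite (Series_incr_1 (fun n => Im (u n))) by exact ex_series_Im.
  now destruct (u 0%nat).
Qed.

Lemma Cmod_csum_le : Cmod (csum u) <= Series c.
Proof.
  set (s := csum u).
  set (v n := Re (Cmult (Cconj s) (u n))).
  (* [Cmod s ^ 2 = Re (conj s * s)], and [Re (conj s * _)] commutes with the series *)
  assert (Hsq : Cmod s ^ 2 = Series v).
  { rewrite Cmod2_alt.
    rewrite (Series_ext v (fun n => Re s * Re (u n) + Im s * Im (u n)))
      by (intro; unfold v; destruct s, (u n); simpl; ring).
    rewrite Series_plus, !Series_scal_l
      by (apply (ex_series_scal_l _ _ ex_series_Re) || apply (ex_series_scal_l _ _ ex_series_Im)).
    destruct s eqn:Es. unfold s in Es. unfold csum in Es. injection Es as -> ->. simpl. ring. }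
  assert (Hv : forall n, Rabs (v n) <= Cmod s * c n).
  { intro n. eapply Rle_trans; [apply re_le_Cmod|].
    rewrite Cmod_mult, Cmod_conj. apply Rmult_le_compat_l; [apply Cmod_ge_0|apply Hu]. }
  assert (Hsc : ex_series (fun n => Cmod s * c n)) by exact (ex_series_scal_l _ _ Hc).
  assert (Hva : ex_series (fun n => Rabs (v n))).
  { eapply (@ex_series_le R_AbsRing R_CompleteNormedModule); [|exact Hsc].
    intro n. change (Rabs (Rabs (v n)) <= Cmod s * c n). rewrite Rabs_Rabsolu. apply Hv. }
  assert (Hc0 : 0 <= Series c).
  { rewrite <- (Rmult_0_l (Series c)), <- Series_scal_l. apply Series_le; [|exact Hc].
    intro n. pose proof (Cmod_ge_0 (u n)). pose proof (Hu n). lra. }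
  assert (Hle : Cmod s ^ 2 <= Cmod s * Series c).
  { rewrite Hsq, <- Series_scal_l.
    eapply Rle_trans; [apply Rle_abs|]. eapply Rle_trans; [apply Series_Rabs, Hva|].
    apply Series_le; [|exact Hsc]. intro n. split; [apply Rabs_pos|apply Hv]. }
  pose proof (Cmod_ge_0 s). nra.
Qed.

End DominatedComplexSeries.

Lemma Series_incr_2 (x : nat -> R) : ex_series x ->
  Series x = x 0%nat + x 1%nat + Series (fun n => x (S (S n))).
Proof.
  intros Hx. rewrite (Series_incr_1 x Hx), (Series_incr_1 (fun n => x (S n))); [ring|].
  now apply (ex_series_incr_1 x).
Qed.

Definition fder1_min r := 2 + 4 * r - (1 + r) / (1 - r) ^ 3.
Definition zfder2_max r := (4 * r + 2 * r ^ 2) / (1 - r) ^ 4 - 4 * r.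

Definition fder1_majorant r n := (INR n + 1) ^ 2 * r ^ n.
Definition fder2_majorant r n := (INR n + 2) * (INR n + 1) * (INR n + 2) * r ^ n.

Lemma ex_series_fder1_majorant r : 0 <= r < 1 -> ex_series (fder1_majorant r).
Proof. apply ex_series_pow_geom. Qed.

Lemma fder2_majorant_comb r n : fder2_majorant r n =
  (INR n + 1) ^ 3 * r ^ n + 0 * r ^ n + 1 * ((INR n + 1) * r ^ n) + 2 * ((INR n + 1) ^ 2 * r ^ n).
Proof. unfold fder2_majorant. ring. Qed.

Lemma ex_series_fder2_majorant r : 0 <= r < 1 -> ex_series (fder2_majorant r).
Proof.
  intros Hr. set (u j n := (INR n + 1) ^ j * r ^ n).
  apply (ex_series_ext (fun n => 1 * u 3%nat n + 1 * u 1%nat n + 2 * u 2%nat n));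
    [intro; unfold u, fder2_majorant; simpl; ring|].
  repeat apply (ex_series_plus (K := R_AbsRing) (V := R_NormedModule));
    apply (ex_series_scal_l (K := R_AbsRing) (V := R_NormedModule)), ex_series_pow_geom, Hr.
Qed.

Lemma Series_fder1_majorant_tail r : 0 <= r < 1 ->
  Series (fun n => fder1_majorant r (S (S n))) = 1 - fder1_min r.
Proof.
  intros Hr. pose proof (Series_incr_2 _ (ex_series_fder1_majorant r Hr)) as E.
  change (Series (fder1_majorant r)) with (pow_series 2 r) in E.
  replace (fder1_majorant r 0) with 1 in E by (unfold fder1_majorant; simpl; ring).
  replace (fder1_majorant r 1) with (4 * r) in E by (unfold fder1_majorant; simpl; ring).
  rewrite pow_series_2 in E by exact Hr. unfold fder1_min. lra.
Qed.

Lemma Series_fder2_majorant_tail r : 0 <= r < 1 ->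
  r * Series (fun n => fder2_majorant r (S n)) = zfder2_max r.
Proof.
  intros Hr. pose proof (Series_incr_1 _ (ex_series_fder2_majorant r Hr)) as E.
  rewrite (Series_ext _ _ (fder2_majorant_comb r)), Series_pow_series_comb in E by exact Hr.
  replace (fder2_majorant r 0) with 4 in E by (unfold fder2_majorant; simpl; ring).
  rewrite pow_series_0, pow_series_1, pow_series_2, pow_series_3 in E by exact Hr.
  replace (Series _) with ((1 + 4 * r + r ^ 2) / (1 - r) ^ 4 + 0 * (1 / (1 - r))
    + 1 * (1 / (1 - r) ^ 2) + 2 * ((1 + r) / (1 - r) ^ 3) - 4) by lra.
  unfold zfder2_max. field. lra.
Qed.

Lemma inF_Cmod_le a n : inF a -> (1 <= n)%nat -> Cmod (a n) <= INR n.
Proof.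
  intros [_ [H1 [H2 H3]]] Hn.
  destruct n as [|[|[|n]]]; [lia| | |apply H3; lia].
  - rewrite H1, Cmod_1. simpl. lra.
  - rewrite H2, Cmod_0. simpl. lra.
Qed.

Lemma Cmod_scaled_term x w z n : 0 <= x ->
  Cmod (Cmult (RtoC x) (Cmult w (cpow z n))) = x * Cmod w * Cmod z ^ n.
Proof. intros Hx. rewrite !Cmod_mult, Cmod_R, Rabs_pos_eq, Cmod_cpow by exact Hx. ring. Qed.

Definition fder1_term a z n := Cmult (RtoC (INR (n + 1))) (Cmult (a (n + 1)%nat) (cpow z n)).
Definition fder2_term a z n :=
  Cmult (RtoC (INR ((n + 2) * (n + 1)))) (Cmult (a (n + 2)%nat) (cpow z n)).

Lemma Cmod_fder1_term_le a z n : inF a -> Cmod (fder1_term a z n) <= fder1_majorant (Cmod z) n.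
Proof.
  intros Ha. unfold fder1_term, fder1_majorant. rewrite Cmod_scaled_term by apply pos_INR.
  pose proof (inF_Cmod_le a (n + 1) Ha ltac:(lia)). rewrite plus_INR in *. simpl INR in *.
  assert (0 <= Cmod z ^ n) by (apply pow_le, Cmod_ge_0). pose proof (pos_INR n).
  rewrite <- Rsqr_pow2. apply Rmult_le_compat_r; [assumption|]. apply Rmult_le_compat_l; lra.
Qed.

Lemma Cmod_fder2_term_le a z n : inF a -> Cmod (fder2_term a z n) <= fder2_majorant (Cmod z) n.
Proof.
  intros Ha. unfold fder2_term, fder2_majorant. rewrite Cmod_scaled_term by apply pos_INR.
  pose proof (inF_Cmod_le a (n + 2) Ha ltac:(lia)). rewrite mult_INR, !plus_INR in *. simpl INR in *.
  assert (0 <= Cmod z ^ n) by (apply pow_le, Cmod_ge_0). pose proof (pos_INR n).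
  apply Rmult_le_compat_r; [assumption|]. apply Rmult_le_compat_l; nra.
Qed.

Lemma fder1_tail a z : inF a -> Cmod z < 1 ->
  fder1 a z = Cplus (RtoC 1) (csum (fun n => fder1_term a z (S (S n)))).
Proof.
  intros Ha Hz. assert (Hr : 0 <= Cmod z < 1) by (split; [apply Cmod_ge_0|exact Hz]).
  pose proof (fun n => Cmod_fder1_term_le a z n Ha) as HU.
  pose proof (ex_series_fder1_majorant _ Hr) as Hc.
  assert (Hc1 : ex_series (fun n => fder1_majorant (Cmod z) (S n)))
    by exact (proj1 (ex_series_incr_1 _) Hc).
  destruct Ha as [_ [H1 [H2 _]]].
  unfold fder1. fold (fder1_term a z).
  rewrite (csum_incr_1 _ _ HU Hc), (csum_incr_1 _ _ (fun n => HU (S n)) Hc1).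
  unfold fder1_term at 1 2. simpl (0 + 1)%nat. simpl (1 + 1)%nat. rewrite H1, H2.
  change (cpow z 0) with (RtoC 1). simpl. ring.
Qed.

Lemma fder2_tail a z : inF a -> Cmod z < 1 ->
  fder2 a z = csum (fun n => fder2_term a z (S n)).
Proof.
  intros Ha Hz. assert (Hr : 0 <= Cmod z < 1) by (split; [apply Cmod_ge_0|exact Hz]).
  unfold fder2. fold (fder2_term a z).
  rewrite (csum_incr_1 _ _ (fun n => Cmod_fder2_term_le a z n Ha) (ex_series_fder2_majorant _ Hr)).
  unfold fder2_term at 1. simpl (0 + 2)%nat. destruct Ha as [_ [_ [-> _]]]. ring.
Qed.

Lemma Cmod_fder1_ge a z : inF a -> Cmod z < 1 -> fder1_min (Cmod z) <= Cmod (fder1 a z).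
Proof.
  intros Ha Hz. assert (Hr : 0 <= Cmod z < 1) by (split; [apply Cmod_ge_0|exact Hz]).
  assert (Hc2 : ex_series (fun n => fder1_majorant (Cmod z) (S (S n))))
    by exact (proj1 (ex_series_incr_n _ 2) (ex_series_fder1_majorant _ Hr)).
  pose proof (Cmod_csum_le _ _ (fun n => Cmod_fder1_term_le a z (S (S n)) Ha) Hc2) as Htail.
  rewrite Series_fder1_majorant_tail in Htail by exact Hr.
  rewrite fder1_tail by assumption.
  set (w := csum (fun n => fder1_term a z (S (S n)))) in *.
  pose proof (Re_1_plus_ge w). pose proof (re_le_Cmod (Cplus (RtoC 1) w)).
  pose proof (Rle_abs (Re (Cplus (RtoC 1) w))). lra.
Qed.

Lemma Cmod_zfder2_le a z : inF a -> Cmod z < 1 -> Cmod (Cmult z (fder2 a z)) <= zfder2_max (Cmod z).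
Proof.
  intros Ha Hz. assert (Hr : 0 <= Cmod z < 1) by (split; [apply Cmod_ge_0|exact Hz]).
  assert (Hd1 : ex_series (fun n => fder2_majorant (Cmod z) (S n)))
    by exact (proj1 (ex_series_incr_1 _) (ex_series_fder2_majorant _ Hr)).
  rewrite fder2_tail, Cmod_mult, <- Series_fder2_majorant_tail by assumption.
  apply Rmult_le_compat_l; [apply Cmod_ge_0|].
  exact (Cmod_csum_le _ _ (fun n => Cmod_fder2_term_le a z (S n) Ha) Hd1).
Qed.

Definition extremal_coef (n : nat) : R :=
  match n with 0 | 2 => 0 | 1 => 1 | _ => - INR n end.
Definition extremal (n : nat) : C := RtoC (extremal_coef n).

Lemma inF_extremal : inF extremal.
Proof.
  unfold inF, extremal. repeat split.
  intros n Hn. destruct n as [|[|[|n]]]; try lia.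
  unfold extremal_coef. rewrite Cmod_R, Rabs_Ropp, Rabs_pos_eq by apply pos_INR. lra.
Qed.

Lemma fder1_term_extremal s n :
  fder1_term extremal (RtoC s) (S (S n)) = RtoC (- fder1_majorant s (S (S n))).
Proof.
  unfold fder1_term, extremal, fder1_majorant. rewrite cpow_RtoC, <- !RtoC_mult. f_equal.
  replace (S (S n) + 1)%nat with (S (S (S n))) by lia. unfold extremal_coef.
  rewrite !S_INR. ring.
Qed.

Lemma fder2_term_extremal s n :
  fder2_term extremal (RtoC s) (S n) = RtoC (- fder2_majorant s (S n)).
Proof.
  unfold fder2_term, extremal, fder2_majorant. rewrite cpow_RtoC, <- !RtoC_mult. f_equal.
  replace (S n + 2)%nat with (S (S (S n))) by lia. unfold extremal_coef.
  rewrite mult_INR, !plus_INR, !S_INR. simpl INR. ring.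
Qed.

Lemma fder1_extremal s : 0 <= s < 1 -> fder1 extremal (RtoC s) = RtoC (fder1_min s).
Proof.
  intros Hs. assert (Hz : Cmod (RtoC s) < 1) by (rewrite Cmod_R, Rabs_pos_eq; lra).
  rewrite (fder1_tail _ _ inF_extremal Hz), (csum_ext _ _ (fder1_term_extremal s)).
  rewrite csum_RtoC, Series_opp, Series_fder1_majorant_tail by exact Hs.
  rewrite <- RtoC_plus. f_equal. ring.
Qed.

Lemma zfder2_extremal s : 0 <= s < 1 ->
  Cmult (RtoC s) (fder2 extremal (RtoC s)) = RtoC (- zfder2_max s).
Proof.
  intros Hs. assert (Hz : Cmod (RtoC s) < 1) by (rewrite Cmod_R, Rabs_pos_eq; lra).
  rewrite (fder2_tail _ _ inF_extremal Hz), (csum_ext _ _ (fder2_term_extremal s)).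
  rewrite csum_RtoC, Series_opp, <- RtoC_mult, <- Series_fder2_majorant_tail by exact Hs.
  f_equal. ring.
Qed.

Definition r0_poly alpha r :=
  2 * (1 - alpha + 2 * (2 - alpha) * r) * (1 - r) ^ 4 - (1 - alpha + 4 * r + (1 + alpha) * r ^ 2).

Lemma r0_poly_eq0 alpha r : r0_eq alpha r -> r0_poly alpha r = 0.
Proof. unfold r0_eq, r0_poly. lra. Qed.

Lemma r0_poly_factor alpha r : r < 1 ->
  r0_poly alpha r = (1 - r) ^ 4 * ((1 - alpha) * fder1_min r - zfder2_max r).
Proof. intros Hr. unfold r0_poly, fder1_min, zfder2_max. field. lra. Qed.

Lemma r0_poly_decreasing alpha s t : 0 <= alpha < 1 -> 0 <= s -> s < t -> t <= 1 ->
  r0_poly alpha t < r0_poly alpha s.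
Proof.
  intros Ha Hs Hst Ht.
  set (dP x := (1 - x) ^ 3 * (4 * alpha - 20 * (2 - alpha) * x) - 4 - 2 * (1 + alpha) * x).
  destruct (MVT_cor2 (r0_poly alpha) dP s t) as [c [Hc Hcst]]; [exact Hst| |].
  - intros c _. apply is_derive_Reals. unfold r0_poly, dP. auto_derive; [exact I|ring].
  - (* on [0, 1] the derivative is at most [4 alpha (1 - c)^3 - 4 < 0] *)
    assert (H3 : 0 <= (1 - c) ^ 3 <= 1) by (split; [apply pow_le|rewrite <- (pow1 3); apply pow_incr]; lra).
    assert (0 <= (1 - c) ^ 3 * c) by (apply Rmult_le_pos; lra).
    assert (dP c < 0) by (unfold dP; nra).
    nra.
Qed.

Lemma zfder2_max_pos r : 0 < r < 1 -> 0 < zfder2_max r.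
Proof.
  intros Hr. assert (H4 : 0 < (1 - r) ^ 4 <= 1)
    by (split; [apply pow_lt|rewrite <- (pow1 4); apply pow_incr]; lra).
  replace (zfder2_max r) with ((4 * r * (1 - (1 - r) ^ 4) + 2 * r ^ 2) / (1 - r) ^ 4)
    by (unfold zfder2_max; field; lra).
  apply Rdiv_lt_0_compat; nra.
Qed.

Lemma majorants_of_r0_poly_nonneg alpha r : 0 <= alpha < 1 -> 0 <= r < 1 -> 0 <= r0_poly alpha r ->
  0 < fder1_min r /\ zfder2_max r <= (1 - alpha) * fder1_min r.
Proof.
  intros Ha Hr HP. rewrite r0_poly_factor in HP by lra.
  assert (0 < (1 - r) ^ 4) by (apply pow_lt; lra).
  assert (Hle : zfder2_max r <= (1 - alpha) * fder1_min r) by nra.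
  split; [|exact Hle].
  destruct (Req_dec r 0) as [->|Hr0].
  - unfold fder1_min. simpl. lra.
  - pose proof (zfder2_max_pos r ltac:(lra)). nra.
Qed.

Lemma majorants_of_r0_poly_pos alpha r : r < 1 -> 0 < r0_poly alpha r ->
  zfder2_max r < (1 - alpha) * fder1_min r.
Proof.
  intros Hr HP. rewrite r0_poly_factor in HP by exact Hr.
  assert (0 < (1 - r) ^ 4) by (apply pow_lt; lra). nra.
Qed.

Lemma majorants_of_r0_poly_neg alpha r : r < 1 -> r0_poly alpha r < 0 ->
  (1 - alpha) * fder1_min r < zfder2_max r.
Proof.
  intros Hr HP. rewrite r0_poly_factor in HP by exact Hr.
  assert (0 < (1 - r) ^ 4) by (apply pow_lt; lra). nra.
Qed.

Lemma Cmod_zf2f1_mul_le a z : inF a -> Cmod z < 1 -> 0 < fder1_min (Cmod z) ->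
  fder1 a z <> RtoC 0 /\ Cmod (zf2f1 a z) * fder1_min (Cmod z) <= zfder2_max (Cmod z).
Proof.
  intros Ha Hz HD.
  pose proof (Cmod_fder1_ge a z Ha Hz) as H1. pose proof (Cmod_zfder2_le a z Ha Hz) as H2.
  assert (Hf : fder1 a z <> RtoC 0) by (intro E; rewrite E, Cmod_0 in H1; lra).
  split; [exact Hf|].
  unfold zf2f1. rewrite Cmod_div by exact Hf.
  assert (0 < Cmod (fder1 a z)) by lra.
  assert (0 <= Cmod (Cmult z (fder2 a z)) / Cmod (fder1 a z))
    by (apply Rdiv_le_0_compat; [apply Cmod_ge_0|assumption]).
  apply Rle_trans with (Cmod (Cmult z (fder2 a z)) / Cmod (fder1 a z) * Cmod (fder1 a z)).
  - apply Rmult_le_compat_l; assumption.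
  - field_simplify; lra.
Qed.

Section Root.

Variables (alpha r0 : R).
Hypothesis Halpha : 0 <= alpha < 1.
Hypothesis Hr0 : 0 < r0 < 1.
Hypothesis Hr0eq : r0_eq alpha r0.

Lemma r0_poly_pos_below_root r : 0 <= r < r0 -> 0 < r0_poly alpha r.
Proof. intros Hr. rewrite <- (r0_poly_eq0 _ _ Hr0eq). apply r0_poly_decreasing; lra. Qed.

Lemma r0_poly_neg_above_root r : r0 < r <= 1 -> r0_poly alpha r < 0.
Proof. intros Hr. rewrite <- (r0_poly_eq0 _ _ Hr0eq). apply r0_poly_decreasing; lra. Qed.

Lemma fder1_min_root_pos : 0 < fder1_min r0.
Proof.
  apply (majorants_of_r0_poly_nonneg alpha); [exact Halpha|lra|].
  rewrite (r0_poly_eq0 _ _ Hr0eq). lra.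
Qed.

Lemma zf2f1_le_within_root a : inF a -> forall z, Cmod z <= r0 ->
  fder1 a z <> RtoC 0 /\ Cmod (zf2f1 a z) <= 1 - alpha.
Proof.
  intros Ha z Hz. pose proof (Cmod_ge_0 z).
  assert (HP : 0 <= r0_poly alpha (Cmod z)).
  { destruct (Req_dec (Cmod z) r0) as [->|]; [rewrite (r0_poly_eq0 _ _ Hr0eq); lra|].
    apply Rlt_le, r0_poly_pos_below_root. lra. }
  destruct (majorants_of_r0_poly_nonneg alpha (Cmod z) Halpha ltac:(lra) HP) as [HD HN].
  destruct (Cmod_zf2f1_mul_le a z Ha ltac:(lra) HD) as [Hf Hw].
  split; [exact Hf|]. nra.
Qed.

Lemma zf2f1_lt_inside_root a : inF a -> forall z, Cmod z < r0 ->
  fder1 a z <> RtoC 0 /\ Cmod (zf2f1 a z) < 1 - alpha.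
Proof.
  intros Ha z Hz. pose proof (Cmod_ge_0 z).
  pose proof (r0_poly_pos_below_root (Cmod z) ltac:(lra)) as HP.
  destruct (majorants_of_r0_poly_nonneg alpha (Cmod z) Halpha ltac:(lra) (Rlt_le _ _ HP)) as [HD _].
  pose proof (majorants_of_r0_poly_pos alpha (Cmod z) ltac:(lra) HP) as HN.
  destruct (Cmod_zf2f1_mul_le a z Ha ltac:(lra) HD) as [Hf Hw].
  split; [exact Hf|]. nra.
Qed.

Lemma fder1_min_nonneg_beyond_root r : r0 < r < 1 -> exists s, r0 < s <= r /\ 0 <= fder1_min s.
Proof.
  intros Hr. pose proof fder1_min_root_pos as HD0.
  destruct (Rle_lt_dec 0 (fder1_min r)) as [HDr|HDr]; [exists r; split; [lra|exact HDr]|].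
  (* clearing the pole of fder1_min gives a polynomial, to which the IVT applies *)
  set (Q x := (2 + 4 * x) * (1 - x) ^ 3 - (1 + x)).
  assert (HQ : forall x, x < 1 -> Q x = (1 - x) ^ 3 * fder1_min x)
    by (intros x Hx; unfold Q, fder1_min; field; lra).
  assert (HQ0 : 0 < Q r0) by (rewrite HQ by lra; apply Rmult_lt_0_compat; [apply pow_lt; lra|exact HD0]).
  assert (HQr : Q r < 0).
  { rewrite HQ by lra. assert (0 < (1 - r) ^ 3) by (apply pow_lt; lra). nra. }
  assert (HQQ : Q r0 * Q r <= 0) by nra.
  destruct (IVT_cor Q r0 r ltac:(unfold Q; reg) ltac:(lra) HQQ) as [s [Hs HQs]].
  assert (s <> r0) by (intros ->; lra).
  exists s. split; [lra|].
  rewrite HQ in HQs by lra. assert (0 < (1 - s) ^ 3) by (apply pow_lt; lra).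
  destruct (Rmult_integral _ _ HQs); lra.
Qed.

Lemma extremal_beyond_root r : r0 < r < 1 -> exists s, r0 < s <= r /\
  (fder1 extremal (RtoC s) = RtoC 0 \/
   exists t, 1 - alpha < t /\ zf2f1 extremal (RtoC s) = RtoC (- t)).
Proof.
  intros Hr. destruct (fder1_min_nonneg_beyond_root r Hr) as [s [Hs [HD|HD]]].
  - exists s. split; [exact Hs|right].
    exists (zfder2_max s / fder1_min s). split.
    + pose proof (majorants_of_r0_poly_neg alpha s ltac:(lra) (r0_poly_neg_above_root s ltac:(lra))).
      apply Rmult_lt_reg_r with (fder1_min s); [exact HD|]. field_simplify; lra.
    + unfold zf2f1. rewrite fder1_extremal, zfder2_extremal, <- RtoC_div by lra.
      f_equal. field. lra.
  - exists s. split; [exact Hs|left]. rewrite fder1_extremal by lra. now rewrite <- HD.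
Qed.

Lemma is_lub_radii (Phi : C -> Prop) :
  (forall w, Cmod w < 1 - alpha -> Phi w) ->
  (forall t, 1 - alpha < t -> ~ Phi (RtoC (- t))) ->
  is_lub (fun r => 0 < r <= 1 /\ forall a, inF a -> forall z : C, Cmod z < r ->
            fder1 a z <> RtoC 0 /\ Phi (zf2f1 a z)) r0.
Proof.
  intros Hinside Hbeyond. split.
  - intros r [Hr Hall]. apply Rnot_lt_le. intros Hlt.
    destruct (extremal_beyond_root ((r0 + r) / 2) ltac:(lra)) as [s [Hs Hext]].
    destruct (Hall extremal inF_extremal (RtoC s)) as [Hf HPhi];
      [rewrite Cmod_R, Rabs_pos_eq; lra|].
    destruct Hext as [Hf0|[t [Ht Hw]]]; [contradiction|].
    rewrite Hw in HPhi. exact (Hbeyond t Ht HPhi).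
  - intros b Hb. apply Hb. split; [lra|].
    intros a Ha z Hz. destruct (zf2f1_lt_inside_root a Ha z Hz) as [Hf Hw].
    split; [exact Hf|]. apply Hinside, Hw.
Qed.

End Root.

Lemma r0_half_bounds r1 : 0 < r1 < 1 -> r0_eq (1 / 2) r1 ->
  1254285 / 10000000 <= r1 < 1254295 / 10000000.
Proof.
  intros Hr1 Hr1eq. assert (Hhalf : 0 <= 1 / 2 < 1) by lra.
  assert (Hlo : 0 < r0_poly (1 / 2) (1254285 / 10000000)) by (unfold r0_poly; lra).
  assert (Hhi : r0_poly (1 / 2) (1254295 / 10000000) < 0) by (unfold r0_poly; lra).
  split.
  - apply Rnot_lt_le. intros Hlt.
    pose proof (r0_poly_neg_above_root _ _ Hhalf Hr1 Hr1eq (1254285 / 10000000) ltac:(lra)). lra.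
  - apply Rnot_le_lt. intros Hle. destruct (Rle_lt_or_eq_dec _ _ Hle) as [Hlt|<-].
    + pose proof (r0_poly_pos_below_root _ _ Hhalf Hr1 Hr1eq (1254295 / 10000000) ltac:(lra)). lra.
    + pose proof (r0_poly_eq0 _ _ Hr1eq). lra.
Qed.

Theorem corollary3p4 (alpha r0 r1 : R)
  (Halpha : 0 <= alpha < 1)
  (Hr0 : 0 < r0 < 1) (Hr0eq : r0_eq alpha r0)
  (Hr1 : 0 < r1 < 1) (Hr1eq : r0_eq (1 / 2) r1) :
  (forall a, inF a -> forall z : C, Cmod z <= r0 ->
     fder1 a z <> RtoC 0 /\ Cmod (zf2f1 a z) <= 1 - alpha) /\
  (forall r, r0 < r < 1 -> exists a, inF a /\ exists z : C, Cmod z <= r /\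
     (fder1 a z = RtoC 0 \/ Cmod (zf2f1 a z) > 1 - alpha)) /\
  is_lub (convex_order_radii alpha) r0 /\
  is_lub unif_convex_radii r1 /\
  1254285 / 10000000 <= r1 < 1254295 / 10000000.
Proof.
  split; [|split; [|split; [|split]]].
  - exact (zf2f1_le_within_root alpha r0 Halpha Hr0 Hr0eq).
  - intros r Hr. destruct (extremal_beyond_root alpha r0 Halpha Hr0 Hr0eq r Hr) as [s [Hs Hext]].
    exists extremal. split; [exact inF_extremal|]. exists (RtoC s).
    split; [rewrite Cmod_R, Rabs_pos_eq; lra|].
    destruct Hext as [Hf|[t [Ht Hw]]]; [now left|right].
    rewrite Hw, Cmod_R, Rabs_Ropp, Rabs_pos_eq; lra.
  - apply (is_lub_radii alpha r0 Halpha Hr0 Hr0eq (fun w => Re (Cplus (RtoC 1) w) > alpha)).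
    + intros w Hw. pose proof (Re_1_plus_ge w). lra.
    + intros t Ht. simpl. lra.
  - assert (Hhalf : 0 <= 1 / 2 < 1) by lra.
    apply (is_lub_radii (1 / 2) r1 Hhalf Hr1 Hr1eq (fun w => Re (Cplus (RtoC 1) w) > Cmod w)).
    + intros w Hw. pose proof (Re_1_plus_ge w). lra.
    + intros t Ht. simpl. rewrite Cmod_R, Rabs_Ropp, Rabs_pos_eq; lra.
  - exact (r0_half_bounds r1 Hr1 Hr1eq).
Qed.
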